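(* Let $P,\sigma_1^2,\sigma_2^2,\sigma_e^2>0$, let $h_1,h_2$ satisfy $0<|h_1|^2\le|h_2|^2$, set $\rho_1=P/\sigma_1^2$, $\rho_2=P/\sigma_2^2$, $\rho_e=P/\sigma_e^2$, and let $Q_1>0$ and $0<\varepsilon<1$. For $\phi_1,\phi_2\in(0,1]$ and $R_E\ge0$ define $$C_1=\log_2\Big(1+\frac{\phi_1\rho_1|h_1|^2}{\phi_2\rho_1|h_1|^2+1}\Big),\qquad R_2^s(\phi_2,R_E)=\big[\log_2(1+\phi_2\rho_2|h_2|^2)-R_E\big]^+,$$ with $[x]^+=\max(x,0)$, and the high-MER asymptotic secrecy outage probability $$P_{out}^{\infty}(R_E,\phi_2)=\begin{cases}\exp\!\Big(-\frac{2^{R_E}-1}{\rho_e(\phi_2-\phi_1(2^{R_E}-1))}\Big), & 2^{R_E}-1<\frac{\phi_2}{\phi_1},\\ 0, & 2^{R_E}-1\ge\frac{\phi_2}{\phi_1}.\end{cases}$$ Consider the problem $\max_{R_E,\phi_1,\phi_2}R_2^s(\phi_2,R_E)$ subject to $C_1\ge Q_1$, $P_{out}^{\infty}(R_E,\phi_2)\le\varepsilon$ and $\phi_1+\phi_2=1$ (the problem \textbf{P1} in the regime $\rho_1/\rho_e\to\infty$). Then the feasibility condition of this problem is $$P>\max\Big(\frac{2^{Q_1}-1}{|h_1|^2}\sigma_1^2,\ \frac{\sigma_2^2}{|h_2|^2}-\frac{\sigma_e^2}{\ln(1/\varepsilon)}\Big),$$ and under this condition the optimal power allocation and redundancy rate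 are $$\phi_2^*=\min\Big(\frac{1}{2^{Q_1}}+\frac{\sigma_1^2}{P|h_1|^22^{Q_1}}-\frac{\sigma_1^2}{P|h_1|^2},\ \frac12+\frac{\sigma_e^2}{2P\ln(1/\varepsilon)}-\frac{\sigma_2^2}{2P|h_2|^2}\Big),$$ $$\phi_1^*=1-\phi_2^*,\qquad R_E^*=\log_2\Big(1+\frac{\phi_2^*P\ln(1/\varepsilon)}{\sigma_e^2+\phi_1^*P\ln(1/\varepsilon)}\Big).$$
   Context: Two-user downlink NOMA with a passive eavesdropper: $\phi_k$ is the fraction of transmit power to user $k$, $C_1$ is the rate of the weak user 1 (required to be at least $Q_1$), $R_2^s$ is the secrecy rate of the strong user 2 with redundancy rate $R_E$, and $P^{\infty}_{out}$ is the limit of user 2's secrecy outage probability as the main-to-eavesdropper ratio $\rho_1/\rho_e=\sigma_e^2/\sigma_1^2\to\infty$; $\varepsilon$ is the maximum allowable secrecy outage probability. *)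

From Stdlib Require Import Reals.
From Coquelicot Require Import Coquelicot.
Open Scope R_scope.

Definition log2 (x : R) : R := ln x / ln 2.

Definition posp (x : R) : R := Rmax x 0.

Definition C1 (rho1 g1 phi1 phi2 : R) : R :=
  log2 (1 + phi1 * rho1 * g1 / (phi2 * rho1 * g1 + 1)).

Definition R2s (rho2 g2 phi2 RE : R) : R :=
  posp (log2 (1 + phi2 * rho2 * g2) - RE).

Definition Pout_inf (rhoe phi1 phi2 RE : R) : R :=
  if Rlt_dec (Rpower 2 RE - 1) (phi2 / phi1)
  then exp (- ((Rpower 2 RE - 1) / (rhoe * (phi2 - phi1 * (Rpower 2 RE - 1)))))
  else 0.

Definition P1_feasible (rho1 rhoe g1 Q1 eps RE phi1 phi2 : R) : Prop :=
  0 < phi1 <= 1 /\ 0 < phi2 <= 1 /\ 0 <= RE /\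
  C1 rho1 g1 phi1 phi2 >= Q1 /\
  Pout_inf rhoe phi1 phi2 RE <= eps /\
  phi1 + phi2 = 1.

(** With [phi1 = 1 - phi2], the QoS constraint of user 1 is the linear bound
    [phi2 <= phi2_qos_max], and the outage constraint says exactly that [RE] is
    at least [RE_min], the redundancy rate at which the outage probability
    equals [eps].  The objective decreases in [RE], so one may take
    [RE = RE_min]; the secrecy rate then becomes
    [log2 (1 + c * phi2 * (2 * phi2_secrecy_peak - phi2))] with [c > 0], a
    parabola in [phi2].  Under [phi2 <= phi2_qos_max] it is maximal at
    [Rmin phi2_qos_max phi2_secrecy_peak], and it is positive somewhere iff both
    bounds are positive, which are the two halves of the power threshold. *)

From Pilot Require Import Defs.
From Stdlib Require Import Reals Lra.
From Coquelicot Require Import Coquelicot.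
Open Scope R_scope.

Lemma ln2_pos : 0 < ln 2.
Proof. pose proof ln_lt_2; lra. Qed.

Lemma log2_1 : log2 1 = 0.
Proof. unfold log2; rewrite ln_1; field; apply Rgt_not_eq, ln2_pos. Qed.

Lemma log2_Rpower (z : R) : log2 (Rpower 2 z) = z.
Proof. unfold log2; rewrite ln_Rpower; field; apply Rgt_not_eq, ln2_pos. Qed.

Lemma log2_div (x y : R) : 0 < x -> 0 < y -> log2 (x / y) = log2 x - log2 y.
Proof.
  intros Hx Hy; unfold log2; rewrite ln_div by assumption.
  field; apply Rgt_not_eq, ln2_pos.
Qed.

Lemma log2_lt_log2_iff (x y : R) : 0 < x -> 0 < y -> (log2 x < log2 y <-> x < y).
Proof.
  intros Hx Hy; unfold log2; pose proof ln2_pos.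
  split; intros Hlt.
  - apply ln_lt_inv; try assumption.
    apply (Rmult_lt_reg_r (/ ln 2)); [apply Rinv_0_lt_compat; lra | exact Hlt].
  - apply Rmult_lt_compat_r; [apply Rinv_0_lt_compat; lra | now apply ln_increasing].
Qed.

Lemma log2_le_log2_iff (x y : R) : 0 < x -> 0 < y -> (log2 x <= log2 y <-> x <= y).
Proof.
  intros Hx Hy; pose proof (log2_lt_log2_iff y x Hy Hx) as Hlt_iff.
  split; intros Hle; apply Rnot_lt_le; intros Hlt; apply Hlt_iff in Hlt; lra.
Qed.

Lemma log2_pos_iff (x : R) : 0 < x -> (0 < log2 x <-> 1 < x).
Proof. intros Hx; rewrite <- log2_1; apply log2_lt_log2_iff; lra. Qed.

Lemma log2_le_iff_le_Rpower (x z : R) : 0 < x -> (log2 x <= z <-> x <= Rpower 2 z).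
Proof.
  intros Hx; rewrite <- (log2_Rpower z) at 1.
  apply log2_le_log2_iff; [exact Hx | apply exp_pos].
Qed.

Lemma Rpower_le_iff_le_log2 (x z : R) : 0 < x -> (z <= log2 x <-> Rpower 2 z <= x).
Proof.
  intros Hx; rewrite <- (log2_Rpower z) at 1.
  apply log2_le_log2_iff; [apply exp_pos | exact Hx].
Qed.

Lemma posp_le (x y : R) : x <= y -> posp x <= posp y.
Proof. apply Rle_max_compat_r. Qed.

Lemma posp_pos_iff (x : R) : 0 < posp x <-> 0 < x.
Proof. unfold posp, Rmax; destruct (Rle_dec x 0); lra. Qed.

Lemma parabola_le_at_Rmin (A B p : R) :
  p <= A -> p * (2 * B - p) <= Rmin A B * (2 * B - Rmin A B).
Proof.
  intros HpA; unfold Rmin; destruct (Rle_dec A B).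
  - assert (0 <= (A - p) * (B - A)) by (apply Rmult_le_pos; lra); nra.
  - pose proof (Rle_0_sqr (B - p)); unfold Rsqr in *; nra.
Qed.

Lemma exp_opp_le_exp_opp_iff (x y : R) : exp (- x) <= exp (- y) <-> y <= x.
Proof.
  split; intros H.
  - apply Rnot_lt_le; intros Hlt.
    apply Rle_not_lt in H; apply H, exp_increasing; lra.
  - destruct (Req_dec x y) as [->|Hne]; [lra|].
    apply Rlt_le, exp_increasing; lra.
Qed.

Section PowerAllocation.

Variables P s1 s2 se g1 g2 Q1 L eps : R.
Hypotheses (HP : 0 < P) (Hs1 : 0 < s1) (Hs2 : 0 < s2) (Hse : 0 < se)
  (Hg1 : 0 < g1) (Hg2 : 0 < g2) (HQ1 : 0 < Q1) (HL : 0 < L)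
  (Heps : eps = exp (- L)).

Definition phi2_qos_max : R :=
  1 / Rpower 2 Q1 + s1 / (P * g1 * Rpower 2 Q1) - s1 / (P * g1).

Definition phi2_secrecy_peak : R :=
  1 / 2 + se / (2 * P * L) - s2 / (2 * P * g2).

Definition phi2_opt : R := Rmin phi2_qos_max phi2_secrecy_peak.

Definition RE_min (phi1 phi2 : R) : R :=
  log2 (1 + phi2 * P * L / (se + phi1 * P * L)).

Definition secrecy_margin (phi2 : R) : R :=
  log2 (1 + phi2 * (P / s2) * g2) - RE_min (1 - phi2) phi2.

Definition secrecy_gain : R := P / s2 * g2 * (P * L) / (se + P * L).

Lemma phi2_qos_max_mul :
  phi2_qos_max * (Rpower 2 Q1 * P * g1) = P * g1 + s1 - Rpower 2 Q1 * s1.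
Proof.
  unfold phi2_qos_max; field.
  repeat split; apply Rgt_not_eq; try assumption; apply exp_pos.
Qed.

Lemma C1_ge_iff (p : R) :
  0 <= p -> (Defs.C1 (P / s1) g1 (1 - p) p >= Q1 <-> p <= phi2_qos_max).
Proof.
  intros Hp; unfold Defs.C1.
  assert (HD : 0 < p * P * g1 + s1).
  { assert (0 <= p * P * g1) by (apply Rmult_le_pos; [apply Rmult_le_pos|]; lra); lra. }
  replace (1 + (1 - p) * (P / s1) * g1 / (p * (P / s1) * g1 + 1))
    with ((P * g1 + s1) / (p * P * g1 + s1)) by (field; lra).
  assert (HN : 0 < P * g1 + s1) by nra.
  pose proof (Rpower_le_iff_le_log2 _ Q1 (Rdiv_lt_0_compat _ _ HN HD)) as Hlog.
  rewrite <- Rle_div_r in Hlog by exact HD.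
  pose proof phi2_qos_max_mul as HA.
  assert (HX : 0 < Rpower 2 Q1 * P * g1).
  { apply Rmult_lt_0_compat; [apply Rmult_lt_0_compat|]; try assumption; apply exp_pos. }
  split; intros HC1.
  - apply Rge_le, Hlog in HC1.
    apply (Rmult_le_reg_r _ _ _ HX); lra.
  - apply Rle_ge, Hlog.
    apply (Rmult_le_compat_r _ _ _ (Rlt_le _ _ HX)) in HC1; lra.
Qed.

Lemma phi2_qos_max_lt_1 : phi2_qos_max < 1.
Proof.
  assert (Ha : 1 < Rpower 2 Q1).
  { rewrite <- (Rpower_O 2) by lra; apply Rpower_lt; lra. }
  assert (HX : 0 < Rpower 2 Q1 * P * g1).
  { apply Rmult_lt_0_compat; [apply Rmult_lt_0_compat|]; lra. }
  apply (Rmult_lt_reg_r _ _ _ HX); rewrite phi2_qos_max_mul.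
  assert (0 < (Rpower 2 Q1 - 1) * (P * g1 + s1)) by (apply Rmult_lt_0_compat; nra).
  lra.
Qed.

Lemma Pout_inf_le_iff_mul (phi1 phi2 RE : R) : 0 < phi1 -> 0 < phi2 ->
  (Pout_inf (P / se) phi1 phi2 RE <= eps <->
   phi2 * P * L <= (Rpower 2 RE - 1) * (se + phi1 * P * L)).
Proof.
  intros Hphi1 Hphi2; unfold Pout_inf; rewrite Heps.
  set (t := Rpower 2 RE - 1).
  destruct (Rlt_dec t (phi2 / phi1)) as [Hlt | Hge].
  - apply Rlt_div_r in Hlt; [|lra].
    assert (Hd : 0 < P / se * (phi2 - phi1 * t)).
    { apply Rmult_lt_0_compat; [apply Rdiv_lt_0_compat|]; lra. }
    rewrite exp_opp_le_exp_opp_iff, <- Rle_div_r by exact Hd.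
    replace (L * (P / se * (phi2 - phi1 * t))) with (L * P * (phi2 - phi1 * t) / se)
      by (field; lra).
    rewrite Rle_div_l by exact Hse.
    lra.
  - apply Rnot_lt_le, Rle_div_l in Hge; [|lra].
    assert (Ht : 0 < t) by nra.
    assert (0 <= (t * phi1 - phi2) * (P * L)) by (apply Rmult_le_pos; nra).
    assert (0 < t * se) by nra.
    split; intros _; [lra | apply Rlt_le, exp_pos].
Qed.

Lemma RE_min_le_iff (phi1 phi2 RE : R) : 0 <= phi1 -> 0 <= phi2 ->
  (RE_min phi1 phi2 <= RE <->
   phi2 * P * L <= (Rpower 2 RE - 1) * (se + phi1 * P * L)).
Proof.
  intros Hphi1 Hphi2; unfold RE_min.
  assert (0 <= phi1 * P * L) by (repeat apply Rmult_le_pos; lra).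
  assert (HD : 0 < se + phi1 * P * L) by lra.
  assert (0 <= phi2 * P * L / (se + phi1 * P * L))
    by (apply Rdiv_le_0_compat; [repeat apply Rmult_le_pos; lra | exact HD]).
  rewrite log2_le_iff_le_Rpower by lra.
  rewrite <- Rle_div_l by exact HD.
  lra.
Qed.

Lemma Pout_inf_le_iff (phi1 phi2 RE : R) : 0 < phi1 -> 0 < phi2 ->
  (Pout_inf (P / se) phi1 phi2 RE <= eps <-> RE_min phi1 phi2 <= RE).
Proof.
  intros Hphi1 Hphi2.
  rewrite Pout_inf_le_iff_mul, RE_min_le_iff by lra.
  reflexivity.
Qed.

Lemma RE_min_nonneg (phi1 phi2 : R) : 0 <= phi1 -> 0 <= phi2 -> 0 <= RE_min phi1 phi2.
Proof.
  intros Hphi1 Hphi2; unfold RE_min.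
  assert (0 <= phi1 * P * L) by (repeat apply Rmult_le_pos; lra).
  assert (0 <= phi2 * P * L / (se + phi1 * P * L))
    by (apply Rdiv_le_0_compat; [repeat apply Rmult_le_pos; lra | lra]).
  rewrite Rpower_le_iff_le_log2, Rpower_O; lra.
Qed.

Lemma P1_feasible_iff (RE phi1 phi2 : R) :
  P1_feasible (P / s1) (P / se) g1 Q1 eps RE phi1 phi2 <->
  phi1 = 1 - phi2 /\ 0 < phi2 < 1 /\ phi2 <= phi2_qos_max /\
  0 <= RE /\ RE_min phi1 phi2 <= RE.
Proof.
  unfold P1_feasible; split.
  - intros (Hphi1 & Hphi2 & HRE & HC1 & Hout & Hsum).
    replace phi1 with (1 - phi2) in * by lra.
    rewrite C1_ge_iff in HC1 by lra.
    rewrite Pout_inf_le_iff in Hout by lra.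
    repeat split; lra.
  - intros (-> & Hphi2 & Hqos & HRE & Hmin).
    rewrite C1_ge_iff, Pout_inf_le_iff by lra.
    repeat split; lra.
Qed.

Lemma secrecy_margin_arg_eq (p : R) :
  (1 + p * (P / s2) * g2) * (se + (1 - p) * P * L) / (se + P * L) =
  1 + secrecy_gain * (p * (2 * phi2_secrecy_peak - p)).
Proof.
  assert (0 < P * L) by nra.
  unfold secrecy_gain, phi2_secrecy_peak; field.
  repeat split; apply Rgt_not_eq; lra.
Qed.

Lemma secrecy_margin_arg_pos (p : R) : 0 <= p <= 1 ->
  0 < 1 + secrecy_gain * (p * (2 * phi2_secrecy_peak - p)).
Proof.
  intros Hp; rewrite <- secrecy_margin_arg_eq.
  assert (0 < P / s2) by (apply Rdiv_lt_0_compat; lra).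
  assert (0 <= p * (P / s2) * g2) by (apply Rmult_le_pos; [apply Rmult_le_pos|]; lra).
  assert (0 <= (1 - p) * P * L) by (repeat apply Rmult_le_pos; lra).
  assert (0 < P * L) by nra.
  apply Rdiv_lt_0_compat; [apply Rmult_lt_0_compat|]; lra.
Qed.

Lemma secrecy_margin_eq (p : R) : 0 <= p <= 1 ->
  secrecy_margin p = log2 (1 + secrecy_gain * (p * (2 * phi2_secrecy_peak - p))).
Proof.
  intros Hp; rewrite <- secrecy_margin_arg_eq.
  assert (0 < P / s2) by (apply Rdiv_lt_0_compat; lra).
  assert (0 <= p * (P / s2) * g2) by (apply Rmult_le_pos; [apply Rmult_le_pos|]; lra).
  assert (0 <= (1 - p) * P * L) by (repeat apply Rmult_le_pos; lra).
  assert (0 < P * L) by nra.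
  unfold secrecy_margin, RE_min.
  replace (1 + p * P * L / (se + (1 - p) * P * L))
    with ((se + P * L) / (se + (1 - p) * P * L)) by (field; lra).
  replace ((1 + p * (P / s2) * g2) * (se + (1 - p) * P * L) / (se + P * L))
    with ((1 + p * (P / s2) * g2) / ((se + P * L) / (se + (1 - p) * P * L)))
    by (field; lra).
  symmetry; apply log2_div; [lra | apply Rdiv_lt_0_compat; lra].
Qed.

Lemma secrecy_gain_pos : 0 < secrecy_gain.
Proof.
  assert (0 < P * L) by nra.
  unfold secrecy_gain; apply Rdiv_lt_0_compat; [|lra].
  apply Rmult_lt_0_compat; [apply Rmult_lt_0_compat; [apply Rdiv_lt_0_compat|]|]; lra.
Qed.

Lemma secrecy_margin_pos_iff (p : R) : 0 <= p <= 1 ->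
  (0 < secrecy_margin p <-> 0 < p * (2 * phi2_secrecy_peak - p)).
Proof.
  intros Hp; pose proof secrecy_gain_pos.
  rewrite secrecy_margin_eq, log2_pos_iff by (try apply secrecy_margin_arg_pos; assumption).
  split; intros Hq; nra.
Qed.

Lemma secrecy_margin_le_opt (p : R) :
  0 <= p <= 1 -> p <= phi2_qos_max -> 0 <= phi2_opt <= 1 ->
  secrecy_margin p <= secrecy_margin phi2_opt.
Proof.
  intros Hp HpA Hopt; pose proof secrecy_gain_pos.
  rewrite !secrecy_margin_eq by assumption.
  apply log2_le_log2_iff; try (apply secrecy_margin_arg_pos; assumption).
  apply Rplus_le_compat_l, Rmult_le_compat_l; [lra|].
  now apply parabola_le_at_Rmin.
Qed.

Lemma R2s_le_secrecy_margin (RE p : R) :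
  RE_min (1 - p) p <= RE -> R2s (P / s2) g2 p RE <= posp (secrecy_margin p).
Proof. intros Hmin; apply posp_le; unfold secrecy_margin; lra. Qed.

Section Feasible.

Hypotheses (HA : 0 < phi2_qos_max) (HB : 0 < phi2_secrecy_peak).

Lemma phi2_opt_bounds : 0 < phi2_opt < 1 /\ phi2_opt <= phi2_qos_max.
Proof.
  pose proof phi2_qos_max_lt_1; pose proof (Rmin_l phi2_qos_max phi2_secrecy_peak).
  unfold phi2_opt; split; [split; [now apply Rmin_glb_lt|]|]; lra.
Qed.

Lemma P1_feasible_opt :
  P1_feasible (P / s1) (P / se) g1 Q1 eps
    (RE_min (1 - phi2_opt) phi2_opt) (1 - phi2_opt) phi2_opt.
Proof.
  pose proof phi2_opt_bounds.
  apply P1_feasible_iff.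
  repeat split; try lra.
  apply RE_min_nonneg; lra.
Qed.

Lemma R2s_opt_pos : 0 < R2s (P / s2) g2 phi2_opt (RE_min (1 - phi2_opt) phi2_opt).
Proof.
  pose proof phi2_opt_bounds; pose proof (Rmin_r phi2_qos_max phi2_secrecy_peak).
  change (0 < posp (secrecy_margin phi2_opt)).
  rewrite posp_pos_iff, secrecy_margin_pos_iff by lra.
  apply Rmult_lt_0_compat; unfold phi2_opt in *; lra.
Qed.

Lemma R2s_le_opt (RE phi1 phi2 : R) :
  P1_feasible (P / s1) (P / se) g1 Q1 eps RE phi1 phi2 ->
  R2s (P / s2) g2 phi2 RE <= R2s (P / s2) g2 phi2_opt (RE_min (1 - phi2_opt) phi2_opt).
Proof.
  pose proof phi2_opt_bounds.
  rewrite P1_feasible_iff; intros (-> & Hphi2 & Hqos & _ & Hmin).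
  apply (Rle_trans _ _ _ (R2s_le_secrecy_margin _ _ Hmin)).
  apply posp_le, secrecy_margin_le_opt; lra.
Qed.

End Feasible.

Lemma P1_solvable_iff :
  (exists RE phi1 phi2, P1_feasible (P / s1) (P / se) g1 Q1 eps RE phi1 phi2 /\
                        0 < R2s (P / s2) g2 phi2 RE) <->
  0 < phi2_qos_max /\ 0 < phi2_secrecy_peak.
Proof.
  split.
  - intros (RE & phi1 & phi2 & Hfeas & Hpos).
    rewrite P1_feasible_iff in Hfeas; destruct Hfeas as (-> & Hphi2 & Hqos & _ & Hmin).
    pose proof (R2s_le_secrecy_margin _ _ Hmin) as Hle.
    assert (Hq : 0 < phi2 * (2 * phi2_secrecy_peak - phi2)).
    { apply secrecy_margin_pos_iff; [lra|]; apply posp_pos_iff; lra. }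
    split; nra.
  - intros [HA HB].
    exists (RE_min (1 - phi2_opt) phi2_opt), (1 - phi2_opt), phi2_opt.
    split; [apply P1_feasible_opt | apply R2s_opt_pos]; assumption.
Qed.

Lemma phi2_qos_max_pos_iff : 0 < phi2_qos_max <-> (Rpower 2 Q1 - 1) / g1 * s1 < P.
Proof.
  assert (HX : 0 < Rpower 2 Q1 * P * g1).
  { apply Rmult_lt_0_compat; [apply Rmult_lt_0_compat|]; try assumption; apply exp_pos. }
  pose proof phi2_qos_max_mul as HA.
  replace ((Rpower 2 Q1 - 1) / g1 * s1) with ((Rpower 2 Q1 - 1) * s1 / g1) by (field; lra).
  rewrite Rlt_div_l by exact Hg1.
  split; intros Hlt.
  - apply (Rmult_lt_compat_r _ _ _ HX) in Hlt; lra.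
  - apply (Rmult_lt_reg_r _ _ _ HX); lra.
Qed.

Lemma phi2_secrecy_peak_pos_iff : 0 < phi2_secrecy_peak <-> s2 / g2 - se / L < P.
Proof.
  assert (HX : 0 < 2 * P * L * g2) by (repeat apply Rmult_lt_0_compat; lra).
  assert (HB : phi2_secrecy_peak * (2 * P * L * g2) = P * L * g2 + se * g2 - s2 * L)
    by (unfold phi2_secrecy_peak; field; repeat split; apply Rgt_not_eq; assumption).
  replace (s2 / g2 - se / L) with ((s2 * L - se * g2) / (g2 * L)) by (field; lra).
  rewrite Rlt_div_l by (apply Rmult_lt_0_compat; assumption).
  split; intros Hlt.
  - apply (Rmult_lt_compat_r _ _ _ HX) in Hlt; lra.
  - apply (Rmult_lt_reg_r _ _ _ HX); lra.
Qed.

Lemma power_threshold_iff :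
  P > Rmax ((Rpower 2 Q1 - 1) / g1 * s1) (s2 / g2 - se / L) <->
  0 < phi2_qos_max /\ 0 < phi2_secrecy_peak.
Proof.
  unfold Rgt; rewrite Rmax_Rlt, phi2_qos_max_pos_iff, phi2_secrecy_peak_pos_iff.
  reflexivity.
Qed.

End PowerAllocation.

Theorem theorem2
  (P s1 s2 se : R) (h1 h2 : C) (Q1 eps : R)
  (HP : 0 < P) (Hs1 : 0 < s1) (Hs2 : 0 < s2) (Hse : 0 < se)
  (Hh1 : 0 < Cmod h1 ^ 2) (Hh12 : Cmod h1 ^ 2 <= Cmod h2 ^ 2)
  (HQ1 : 0 < Q1) (Heps0 : 0 < eps) (Heps1 : eps < 1) :
  let g1 := Cmod h1 ^ 2 in
  let g2 := Cmod h2 ^ 2 in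
  let rho1 := P / s1 in
  let rho2 := P / s2 in
  let rhoe := P / se in
  let L := ln (1 / eps) in
  let phi2s := Rmin (1 / Rpower 2 Q1 + s1 / (P * g1 * Rpower 2 Q1) - s1 / (P * g1))
                    (1 / 2 + se / (2 * P * L) - s2 / (2 * P * g2)) in
  let phi1s := 1 - phi2s in
  let REs := log2 (1 + phi2s * P * L / (se + phi1s * P * L)) in
  ((exists RE phi1 phi2,
       P1_feasible rho1 rhoe g1 Q1 eps RE phi1 phi2 /\ 0 < R2s rho2 g2 phi2 RE)
     <-> P > Rmax ((Rpower 2 Q1 - 1) / g1 * s1) (s2 / g2 - se / L)) /\
  (P > Rmax ((Rpower 2 Q1 - 1) / g1 * s1) (s2 / g2 - se / L) ->
     P1_feasible rho1 rhoe g1 Q1 eps REs phi1s phi2s /\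
     forall RE phi1 phi2,
       P1_feasible rho1 rhoe g1 Q1 eps RE phi1 phi2 ->
       R2s rho2 g2 phi2 RE <= R2s rho2 g2 phi2s REs).
Proof.
  intros g1 g2 rho1 rho2 rhoe L phi2s phi1s REs.
  assert (Hg2 : 0 < g2) by (change (0 < Cmod h2 ^ 2); lra).
  assert (HL : 0 < L).
  { rewrite <- ln_1; apply ln_increasing; [lra|].
    apply Rlt_div_r; lra. }
  assert (Heps : eps = exp (- L)).
  { unfold L; rewrite ln_div, ln_1, Rminus_0_l, Ropp_involutive, exp_ln; lra. }
  rewrite (power_threshold_iff P s1 s2 se g1 g2 Q1 L); try assumption.
  split.
  - apply P1_solvable_iff; assumption.
  - intros [HA HB]; split.
    + apply P1_feasible_opt; assumption.
    + intros RE phi1 phi2; apply R2s_le_opt; assumption.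
Qed.
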